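(* Let $G=(\mathcal{S},\mathbb{A})$ be a finite directed acyclic graph with a unique initial state $s_0\in\mathcal{S}$ having no incoming edges, such that every state is reachable from $s_0$. Let $\mathcal{X}\subset\mathcal{S}$ be the set of terminal states (states with no outgoing edges), and assume $\mathcal{X}\neq\emptyset$. Let $\mathcal{E}:\mathcal{S}\to\mathbb{R}$ be an energy function defined on all states, and for an edge $(s\to s')\in\mathbb{A}$ put $\mathcal{E}(s\to s')=\mathcal{E}(s')-\mathcal{E}(s)$. The reward of a terminal state $x$ is $R(x)=e^{-\mathcal{E}(x)}$. Let $P_F$ be a forward policy, i.e. for each nonterminal $s$ a probability distribution $P_F(\cdot\mid s)$ on the children of $s$; let $P_B$ be a backward policy, i.e. for each $s'\neq s_0$ a probability distribution $P_B(\cdot\mid s')$ on the parents of $s'$; and let $\widetilde F:\mathcal{S}\to(0,\infty)$ (the forward-looking flow) satisfy $\widetilde F(x)=1$ for every $x\in\mathcal{X}$. Suppose that for every edge $(s\to s')\in\mathbb{A}$ the FL-DB loss $$\mathcal{L}(s,s')=\Big(\log\widetilde F(s)+\log P_F(s'\mid s)-\log\widetilde F(s')-\log P_B(s\mid s')+\mathcal{E}(s\to s')\Big)^2$$ vanishes, i.e. $\widetilde F(s)P_F(s'\mid s)=\widetilde F(s')P_B(s\mid s')e^{-\mathcal{E}(s\to s')}$. Then $P_F$ samples terminal states proportionally to the reward: for every $x\in\mathcal{X}$, $$P_F^\top(x)=\frac{e^{-\mathcal{E}(x)}}{\sum_{y\in\mathcal{X}}e^{-\mathcal{E}(y)}},$$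 where $P_F^\top(x)=\sum_{\tau=(s_0\to s_1\to\cdots\to s_n=x)}\prod_{i=1}^n P_F(s_i\mid s_{i-1})$ is the probability that a trajectory started at $s_0$ and following $P_F$ until reaching a terminal state ends at $x$ (the sum is over all complete trajectories, i.e. directed paths in $G$ from $s_0$ to $x$).
   Context: This is the correctness statement for ''forward-looking GFlowNets''. The forward-looking flow $\widetilde F$ is intended to represent $e^{\mathcal{E}(s)}F(s)$, where $F$ is an ordinary GFlowNet state flow; at terminal states the ordinary flow equals the reward $e^{-\mathcal{E}(x)}$, which corresponds to the normalization $\widetilde F(x)=1$ for $x\in\mathcal{X}$. *)

From HB Require Import structures.
From mathcomp Require Import all_boot all_order all_algebra.
From mathcomp Require Import reals sequences exp.
Set Implicit Arguments. Unset Strict Implicit. Unset Printing Implicit Defensive.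
Import Order.TTheory GRing.Theory Num.Theory.
Local Open Scope ring_scope.

Definition terminal (S : finType) (e : rel S) (s : S) : bool :=
  [forall s' : S, ~~ e s s'].

Definition acyclic (S : finType) (e : rel S) : Prop :=
  forall (s : S) (p : seq S), p != [::] -> path e s p -> last s p != s.

(* product of policy weights along a trajectory s -> t_1 -> ... -> t_n;
   PF s s' stands for P_F(s' | s). *)
Fixpoint traj_weight (R : realType) (S : finType) (PF : S -> S -> R)
    (s : S) (t : seq S) : R :=
  match t with
  | [::] => 1
  | s' :: t' => PF s s' * traj_weight PF s' t'
  end.

(* A path is encoded by
   the tuple (s1,...,sn) of its states after s0.  In a DAG every directed path
   has at most #|S| - 1 edges, so n ranges over n < #|S|. *)
Definition PF_top (R : realType) (S : finType) (e : rel S) (PF : S -> S -> R)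
    (s0 x : S) : R :=
  \sum_(n < #|S|) \sum_(t : n.-tuple S | path e s0 t && (last s0 t == x))
     traj_weight PF s0 t.

From HB Require Import structures.
From mathcomp Require Import all_boot all_order all_algebra.
From mathcomp Require Import reals sequences exp.
Import Order.TTheory GRing.Theory Num.Theory.
Local Open Scope ring_scope.

(* Write [walk_weight M n s x] for the total weight of the length-n walks from
   s to x under a kernel M, i.e. the (s, x) entry of the matrix power M^n.
   The argument has three ingredients.
   - Time reversal: if F u * M u v = F v * N v u for all u, v (detailed
     balance), then F s * M^n(s, x) = F x * N^n(x, s).
   - Absorption: if M is stochastic off an absorbing set A, vanishes on A,
     and has no walks of length k, then the mass absorbed in A before time
     k is 1.  On a DAG every walk has fewer than #|S| edges.
   - With F s = Ft s * exp(-En s), the vanishing FL-DB loss is detailed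
     balance between P_F and P_B.  Absorption of P_B at s0 gives
     F s0 * P_F^T(x) = F x = exp(-En x) for every terminal x, and absorption
     of P_F in the terminal states gives F s0 = sum_y exp(-En y). *)

Section Walks.
Context {R : realType} {S : finType}.
Implicit Types (M N : S -> S -> R) (s x : S).

Definition walk_weight M (n : nat) s x : R :=
  \sum_(t : n.-tuple S | last s t == x) traj_weight M s t.

Lemma walk_weight0 M s x : walk_weight M 0 s x = (s == x)%:R.
Proof.
rewrite /walk_weight big_mkcond (big_pred1 [tuple]) /=; last first.
  by move=> t; apply/esym/eqP/tuple0.
by case: eqP.
Qed.

Lemma walk_weightS M n s x :
  walk_weight M n.+1 s x = \sum_s' M s s' * walk_weight M n s' x.
Proof.
rewrite /walk_weight; under [RHS]eq_bigr do rewrite mulr_sumr.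
rewrite pair_big_dep /=.
rewrite (reindex (fun p : S * n.-tuple S => [tuple of p.1 :: p.2])) /=.
  by apply: eq_bigr => -[a t].
exists (fun t : n.+1.-tuple S => (thead t, [tuple of behead t])) => //.
  by move=> [a t] _ /=; congr pair; apply: val_inj.
by move=> t _ /=; rewrite [in RHS](tuple_eta t).
Qed.

Lemma walk_weightSr M n s x :
  walk_weight M n.+1 s x = \sum_u walk_weight M n s u * M u x.
Proof.
elim: n s => [|n IHn] s.
  rewrite walk_weightS; under eq_bigr do rewrite walk_weight0.
  under [RHS]eq_bigr do rewrite walk_weight0.
  rewrite (bigD1 x) //= eqxx mulr1 big1 ?addr0; last first.
    by move=> u /negbTE ->; rewrite mulr0.
  rewrite (bigD1 s) //= eqxx mul1r big1 ?addr0 // => u.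
  by rewrite eq_sym => /negbTE ->; rewrite mul0r.
rewrite walk_weightS; under eq_bigr do rewrite IHn mulr_sumr.
rewrite exchange_big /=; apply: eq_bigr => u _.
by rewrite walk_weightS mulr_suml; apply: eq_bigr => v _; rewrite mulrA.
Qed.

Lemma walk_weight_reversal {M N} {F : S -> R} n s x :
  (forall u v, F u * M u v = F v * N v u) ->
  F s * walk_weight M n s x = F x * walk_weight N n x s.
Proof.
move=> Hbal; elim: n x => [|n IHn] x.
  by rewrite !walk_weight0 eq_sym; case: eqP => [->|]; rewrite ?mulr1 ?mulr0.
rewrite walk_weightSr walk_weightS !mulr_sumr; apply: eq_bigr => u _.
by rewrite mulrA IHn mulrAC Hbal mulrA.
Qed.

Lemma absorption {M} {A : pred S} {k : nat} {s} :
  (forall u v, A u -> M u v = 0) ->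
  (forall u, ~~ A u -> \sum_v M u v = 1) ->
  (forall x, walk_weight M k s x = 0) ->
  \sum_(n < k) \sum_(u | A u) walk_weight M n s u = 1.
Proof.
move=> HA Hstoch Hlong.
pose alive n := \sum_u walk_weight M n s u.
(* Mass alive at time n is either absorbed at time n or alive at time n+1. *)
have Halive n : \sum_(u | A u) walk_weight M n s u = alive n - alive n.+1.
  rewrite /alive; under [X in _ = _ - X]eq_bigr do rewrite walk_weightSr.
  rewrite exchange_big /=; under [X in _ = _ - X]eq_bigr do rewrite -mulr_sumr.
  rewrite [in RHS](bigID A) [X in _ = _ - X](bigID A) /=.
  rewrite [X in _ = _ - (X + _)]big1 => [|u Hu]; last first.
    by rewrite big1 ?mulr0 // => v _; rewrite HA.
  rewrite add0r [X in _ = _ - X](eq_bigr (fun u => walk_weight M n s u)).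
    by rewrite addrK.
  by move=> u Hu; rewrite Hstoch // mulr1.
rewrite -(big_mkord xpredT (fun n => \sum_(u | A u) walk_weight M n s u)).
rewrite (telescope_sumr_eq (fun n => - alive n)) // => [|n _]; last first.
  by rewrite Halive opprK addrC.
rewrite opprK /alive big1 ?oppr0 ?add0r // (bigD1 s) //= walk_weight0 eqxx.
by rewrite big1 ?addr0 // => u; rewrite walk_weight0 eq_sym => /negbTE ->.
Qed.

End Walks.

Definition supported_on {R : realType} {S : finType} (e : rel S)
    (M : S -> S -> R) : Prop :=
  forall u v, ~~ e u v -> M u v = 0.

Section Graphs.
Context {R : realType} {S : finType} {e : rel S}.
Implicit Types (M : S -> S -> R) (s x : S).

Lemma traj_weight_nopath M s t :
  supported_on e M -> ~~ path e s t -> traj_weight M s t = 0.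
Proof.
move=> HM; elim: t s => [|y t IHt] s //=.
have [Hy Hp|Hy _] := boolP (e s y); first by rewrite IHt ?mulr0.
by rewrite HM ?mul0r.
Qed.

Lemma acyclic_path_uniq {s t} : acyclic e -> path e s t -> uniq (s :: t).
Proof.
move=> Hac; elim: t s => [|y t IHt] s //= /andP [Hsy Hp].
have /= /andP [-> ->] := IHt y Hp; rewrite !andbT; apply/negP => Hs.
have : path e s (y :: t) by rewrite /= Hsy.
case/path.splitP: (Hs : s \in y :: t) => p1 p2; rewrite cat_path => /andP [Hc _].
by move: (Hac s (rcons p1 s)); rewrite last_rcons eqxx -size_eq0 size_rcons => /(_ isT Hc).
Qed.

Lemma acyclic_rev : acyclic e -> acyclic [rel u v | e v u].
Proof.
move=> Hac s [//|y p] _ Hp; apply/negP => /eqP Hl.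
have : path e (last s (y :: p)) (rev (belast s (y :: p))) by rewrite rev_path.
rewrite Hl; move/(Hac s); rewrite rev_cons last_rcons eqxx -size_eq0 size_rcons.
by move/(_ isT).
Qed.

Lemma walk_weight_long {M n s x} : acyclic e ->
  supported_on e M -> (#|S| <= n)%N -> walk_weight M n s x = 0.
Proof.
move=> Hac HM Hn; apply: big1 => t _.
have [Hp|] := boolP (path e s t); last exact: traj_weight_nopath.
have /card_uniqP Hcard := acyclic_path_uniq Hac Hp.
have := max_card (mem (s :: val t)); rewrite Hcard /= size_tuple => Hle.
by have := leq_trans Hle Hn; rewrite ltnn.
Qed.

Lemma PF_top_walk_weight {M s0 x} : supported_on e M ->
  PF_top e M s0 x = \sum_(n < #|S|) walk_weight M n s0 x.
Proof.
move=> HM; apply: eq_bigr => n _; rewrite /walk_weight big_mkcondl.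
by apply: eq_bigr => t _; case: ifP => // /negbT Hp; rewrite traj_weight_nopath.
Qed.

Lemma sum_children {M} s : supported_on e M ->
  \sum_(v | e s v) M s v = \sum_v M s v.
Proof. by move=> HM; apply: big_rmcond => v /HM. Qed.

Lemma fldb_detailed_balance {En Ft : S -> R} {PF PB : S -> S -> R} :
  supported_on e PF -> (forall v u, ~~ e u v -> PB v u = 0) ->
  (forall u v, e u v -> Ft u * PF u v = Ft v * PB v u * expR (- (En v - En u))) ->
  forall u v, Ft u * expR (- En u) * PF u v = Ft v * expR (- En v) * PB v u.
Proof.
move=> HPF HPB HDB u v; have [Huv|Huv] := boolP (e u v); last first.
  by rewrite HPF ?HPB ?mulr0.
rewrite mulrAC HDB // -!mulrA -expRD [expR (- En v) * _]mulrC.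
by rewrite opprB addrAC subrr add0r.
Qed.

End Graphs.

(* PF s s' = P_F(s' | s);  PB s' s = P_B(s | s');  Ft = forward-looking flow;
   En = energy function. *)
Theorem proposition4p2 (R : realType) (S : finType) (e : rel S) (s0 : S)
    (En : S -> R) (PF PB : S -> S -> R) (Ft : S -> R)
    (* G is a DAG with initial state s0 (no incoming edges), all states reachable *)
    (Hacyc : acyclic e)
    (Hs0 : forall s : S, ~~ e s s0)
    (Hreach : forall s : S, connect e s0 s)
    (* the set of terminal states is nonempty *)
    (HX : exists x : S, terminal e x)
    (* forward policy: a probability distribution on children of each nonterminal s *)
    (HPF_ge0 : forall s s' : S, 0 <= PF s s')
    (HPF_supp : forall s s' : S, ~~ e s s' -> PF s s' = 0)
    (HPF_sum : forall s : S, ~~ terminal e s -> \sum_(s' : S | e s s') PF s s' = 1)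
    (* backward policy: a probability distribution on parents of each s' <> s0 *)
    (HPB_ge0 : forall s' s : S, 0 <= PB s' s)
    (HPB_supp : forall s' s : S, ~~ e s s' -> PB s' s = 0)
    (HPB_sum : forall s' : S, s' != s0 -> \sum_(s : S | e s s') PB s' s = 1)
    (* forward-looking flow: positive, equal to 1 on terminal states *)
    (HFt_pos : forall s : S, 0 < Ft s)
    (HFt_term : forall x : S, terminal e x -> Ft x = 1)
    (* FL-DB loss vanishes on every edge *)
    (HDB : forall s s' : S, e s s' ->
       Ft s * PF s s' = Ft s' * PB s' s * expR (- (En s' - En s))) :
  forall x : S, terminal e x ->
    PF_top e PF s0 x =
      expR (- En x) / \sum_(y : S | terminal e y) expR (- En y).
Proof.
pose F u := Ft u * expR (- En u).
have Hbal : forall u v, F u * PF u v = F v * PB v u :=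
  fldb_detailed_balance HPF_supp HPB_supp HDB.
have HPB_rev_supp : supported_on [rel a b | e b a] PB by [].
have Hback y : \sum_(n < #|S|) walk_weight PB n y s0 = 1.
  rewrite -(absorption (A := pred1 s0) (M := PB) (k := #|S|) (s := y)).
  - by apply: eq_bigr => n _; rewrite big_pred1_eq.
  - by move=> u v /eqP ->; rewrite HPB_supp.
  - by move=> u Hu; rewrite -(HPB_sum u Hu) (sum_children _ HPB_rev_supp).
  - by move=> z; apply: (walk_weight_long (acyclic_rev Hacyc) HPB_rev_supp).
have Hfwd : \sum_(n < #|S|) \sum_(y | terminal e y) walk_weight PF n s0 y = 1.
  apply: absorption.
  - by move=> u v /forallP /(_ v) Huv; rewrite HPF_supp.
  - by move=> u Hu; rewrite -(HPF_sum u Hu) (sum_children _ HPF_supp).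
  - by move=> z; apply: (walk_weight_long Hacyc).
(* Reversing walks to s0: F s0 * P_F^T(y) = F y. *)
have Hflow y : F s0 * PF_top e PF s0 y = F y.
  rewrite PF_top_walk_weight // mulr_sumr.
  under eq_bigr do rewrite (walk_weight_reversal _ _ _ Hbal).
  by rewrite -mulr_sumr Hback mulr1.
have HZ : \sum_(y | terminal e y) expR (- En y) = F s0.
  rewrite -[RHS]mulr1 -Hfwd exchange_big mulr_sumr; apply: eq_bigr => y Hy.
  by rewrite -(PF_top_walk_weight HPF_supp) Hflow /F HFt_term // mul1r.
move=> x Hx; have HF0 : F s0 != 0 by rewrite gt_eqF // mulr_gt0 ?expR_gt0.
have HFx : F x = expR (- En x) by rewrite /F HFt_term // mul1r.
by rewrite HZ -HFx -(Hflow x) mulrAC divff // mul1r.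
Qed.
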